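(* Let $n\ge 1$, let $c\in\mathbb{R}^n$ with $c_1\ge c_2\ge\cdots\ge c_n\ge 0$, and let $u\in\mathbb{R}^n$ with $u_i>0$ for all $i$. Let $f(x)=\frac12\left(\sum_{i=1}^n x_i\right)^2-\sum_{i=1}^n c_ix_i$. For $k=0,\dots,n$ let $U_k=\sum_{i=1}^k u_i$ ($U_0=0$) and let $x^{(k)}$ be the vector with $x^{(k)}_i=u_i$ for $i\le k$ and $x^{(k)}_i=0$ for $i>k$. For $k=1,\dots,n$ let $G_k=U_{k-1}+\frac12u_k-c_k$, and suppose $\bar n$ is the smallest index in $\{1,\dots,n\}$ with $G_{\bar n}\ge 0$ and that $\bar n>1$. Let $\delta_1=\min\{c_{\bar n-1}-U_{\bar n-2},\,u_{\bar n-1}\}$, $\delta_2=\max\{c_{\bar n}-U_{\bar n-1},\,0\}$, $\bar x=x^{(\bar n-2)}+\delta_1e_{\bar n-1}$ and $\tilde x=x^{(\bar n-1)}+\delta_2e_{\bar n}$, where $e_i$ is the $i$-th standard unit vector. Then: (i) if $\delta_1=u_{\bar n-1}$, then $\min\{f(\bar x),f(\tilde x)\}=f(\tilde x)$; (ii) if $\delta_2=0$, then $\min\{f(\bar x),f(\tilde x)\}=f(\bar x)$. *)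

From mathcomp Require Import all_boot all_order all_algebra.
Set Implicit Arguments. Unset Strict Implicit. Unset Printing Implicit Defensive.
Import Order.TTheory GRing.Theory Num.Theory.
Local Open Scope ring_scope.

(* Vectors in R^n are represented as functions nat -> R, using only the
   coordinates 1..n (1-based, as in the paper). *)

Section Defs.
Variable R : realFieldType.

Definition fobj (n : nat) (c x : nat -> R) : R :=
  2^-1 * (\sum_(1 <= i < n.+1) x i) ^+ 2 - \sum_(1 <= i < n.+1) c i * x i.

Definition Usum (u : nat -> R) (k : nat) : R := \sum_(1 <= i < k.+1) u i.

Definition xk (u : nat -> R) (k : nat) : nat -> R :=
  fun i => if (i <= k)%N then u i else 0.

Definition evec (j : nat) : nat -> R := fun i => if i == j then 1 else 0.

Definition Gk (u c : nat -> R) (k : nat) : R := Usum u k.-1 + 2^-1 * u k - c k.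
End Defs.

From mathcomp Require Import all_boot all_order all_algebra.
From mathcomp Require Import ring.
Set Implicit Arguments. Unset Strict Implicit. Unset Printing Implicit Defensive.
Import Order.TTheory GRing.Theory Num.Theory.
Local Open Scope ring_scope.

(* On the line through x^(k) in direction e_(k+1), f restricts to the parabola
   t |-> 1/2 (U_k + t)^2 - c_(k+1) t - sum_(i<=k) c_i u_i, whose vertex is
   t = c_(k+1) - U_k.  Hence delta1 and delta2 are the vertices clamped to
   (-oo, u_(nb-1)] and [0, +oo) respectively, so each minimises its parabola
   on that half-line.  In case (i) xbar = x^(nb-1), which is the point t = 0
   on the line of xtil; in case (ii) xtil = x^(nb-1), which is the point
   t = u_(nb-1) on the line of xbar. *)

Section Parabola.
Variable R : realFieldType.

Definition parab (a b t : R) : R := 2^-1 * (a + t) ^+ 2 - b * t.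

Lemma parabE (a b t : R) :
  parab a b t = parab a b (b - a) + 2^-1 * (t - (b - a)) ^+ 2.
Proof. by rewrite /parab; field. Qed.

Lemma parab_max_le (a b lo t : R) :
  lo <= t -> parab a b (Num.max (b - a) lo) <= parab a b t.
Proof.
move=> lo_t; rewrite [X in _ <= X]parabE.
have [v_lo|_] := leP (b - a) lo; last first.
  by rewrite lerDl mulr_ge0 ?sqr_ge0 ?invr_ge0 ?ler0n.
rewrite [X in X <= _]parabE lerD2l ler_pM2l ?invr_gt0 ?ltr0n //.
by rewrite ler_sqr ?nnegrE ?lerD2r ?subr_ge0 // (le_trans v_lo).
Qed.

Lemma parab_min_le (a b hi t : R) :
  t <= hi -> parab a b (Num.min (b - a) hi) <= parab a b t.
Proof.
move=> t_hi; rewrite [X in _ <= X]parabE.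
have [_|hi_v] := leP (b - a) hi.
  by rewrite lerDl mulr_ge0 ?sqr_ge0 ?invr_ge0 ?ler0n.
rewrite [X in X <= _]parabE lerD2l ler_pM2l ?invr_gt0 ?ltr0n //.
rewrite -sqrrN -[X in _ <= X]sqrrN !opprB.
by rewrite ler_sqr ?nnegrE ?lerD2l ?lerN2 ?subr_ge0 // ?(le_trans t_hi) ?ltW.
Qed.

End Parabola.

Section Objective.
Variables (R : realFieldType) (n : nat) (u : nat -> R).

Lemma sum_mul_xk_evec (g : nat -> R) (k : nat) (t : R) : (k < n)%N ->
  \sum_(1 <= i < n.+1) g i * (xk u k i + t * evec R k.+1 i)
  = \sum_(1 <= i < k.+1) g i * u i + g k.+1 * t.
Proof.
move=> kn; rewrite (big_cat_nat _ (n := k.+2)) //= big_nat_recr //=.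
rewrite [X in _ + X]big_nat_cond [X in _ + X]big1 ?addr0; last first.
  move=> i /andP[/andP[ki _] _].
  by rewrite /xk /evec leqNgt ltnW // gtn_eqF // mulr0 addr0 mulr0.
rewrite /xk /evec ltnn eqxx mulr1 add0r; congr (_ + _).
by apply: eq_big_nat => i /andP[_ ik]; rewrite /xk /evec -ltnS ik ltn_eqF // mulr0 addr0.
Qed.

Lemma fobj_xk_evec (c : nat -> R) (k : nat) (t : R) : (k < n)%N ->
  fobj n c (fun i => xk u k i + t * evec R k.+1 i)
  = parab (Usum u k) (c k.+1) t - \sum_(1 <= i < k.+1) c i * u i.
Proof.
move=> kn; rewrite /fobj sum_mul_xk_evec //.
rewrite (eq_bigr (fun i => 1 * (xk u k i + t * evec R k.+1 i))) => [|i _]; last first.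
  by rewrite mul1r.
rewrite sum_mul_xk_evec // mul1r /Usum (eq_bigr u) => [|i _]; last by rewrite mul1r.
by rewrite /parab; ring.
Qed.

Lemma xk_succE (k : nat) :
  xk u k.+1 =1 (fun i => xk u k i + u k.+1 * evec R k.+1 i).
Proof.
move=> i; rewrite /xk /evec leq_eqVlt ltnS.
by case: eqP => [->|_]; rewrite ?ltnn ?mulr1 ?add0r ?mulr0 ?addr0.
Qed.

Lemma eq_fobj (c x y : nat -> R) : x =1 y -> fobj n c x = fobj n c y.
Proof.
by move=> xy; rewrite /fobj; congr (2^-1 * _ ^+ 2 - _); apply: eq_bigr => i _; rewrite xy.
Qed.

End Objective.

Theorem corollary3 (R : realFieldType) (n : nat) (c u : nat -> R) (nb : nat) :
  (1 <= n)%N ->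
  (forall i, (1 <= i)%N -> (i < n)%N -> c (i.+1) <= c i) ->
  0 <= c n ->
  (forall i, (1 <= i <= n)%N -> 0 < u i) ->
  (1 <= nb <= n)%N ->
  0 <= Gk u c nb ->
  (forall k, (1 <= k < nb)%N -> Gk u c k < 0) ->
  (1 < nb)%N ->
  let delta1 := Num.min (c nb.-1 - Usum u nb.-2) (u nb.-1) in
  let delta2 := Num.max (c nb - Usum u nb.-1) 0 in
  let xbar := fun i => xk u nb.-2 i + delta1 * evec R nb.-1 i in
  let xtil := fun i => xk u nb.-1 i + delta2 * evec R nb i in
  (delta1 = u nb.-1 ->
     Num.min (fobj n c xbar) (fobj n c xtil) = fobj n c xtil) /\
  (delta2 = 0 ->
     Num.min (fobj n c xbar) (fobj n c xtil) = fobj n c xbar).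
Proof.
move=> _ _ _ _ /andP[_ nbn] _ _ nb_gt1.
case: nb nbn nb_gt1 => [|[|m]] // mn _ delta1 delta2 xbar xtil.
have m_lt_n : (m < n)%N := ltnW mn.
have f_xk : fobj n c (fun i => xk u m i + u m.+1 * evec R m.+1 i)
          = fobj n c (fun i => xk u m.+1 i + 0 * evec R m.+2 i).
  by apply: eq_fobj => i; rewrite -xk_succE mul0r addr0.
rewrite /xbar /xtil /=; move: f_xk; rewrite !fobj_xk_evec // => f_xk.
split => [delta1E | delta2E].
- by apply: min_r; rewrite delta1E f_xk lerD2r; exact: parab_max_le.
- by apply: min_l; rewrite delta2E -f_xk lerD2r; exact: parab_min_le.
Qed.
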